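(* Let $\mathbf{P}_1,\mathbf{P}_2\subseteq\mathbb{Z}^n$ be $\mathbb{N}$-generated sets with a non-degenerate intersection. Then for all $\mathbf{p}_1\in\mathbf{P}_1$ and $\mathbf{p}_2\in\mathbf{P}_2$ there exist $\mathbf{p}_1'\in\mathbf{P}_1$ and $\mathbf{p}_2'\in\mathbf{P}_2$ such that $\mathbf{p}_1+\mathbf{p}_1'=\mathbf{p}_2+\mathbf{p}_2'$.
   Context: A set is $\mathbb{N}$-generated if it is the set $\mathbb{N}(\mathbf{G})$ of finite $\mathbb{N}$-linear combinations of some set $\mathbf{G}$. Dimension of $\mathbf{X}\subseteq\mathbb{Q}^n$: least $k$ such that $\mathbf{X}\subseteq\bigcup_{i=1}^r(\mathbf{b}_i+\mathbf{V}_i)$ for finitely many $\mathbf{b}_i\in\mathbb{Q}^n$ and vector subspaces $\mathbf{V}_i$ of dimension $\le k$. $\mathbf{X}_1,\mathbf{X}_2$ have a non-degenerate intersection if $\dim(\mathbf{X}_1\cap\mathbf{X}_2)=\dim(\mathbf{X}_1)=\dim(\mathbf{X}_2)$. *)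

From HB Require Import structures.
From mathcomp Require Import all_boot all_order all_algebra.
Set Implicit Arguments. Unset Strict Implicit. Unset Printing Implicit Defensive.
Import Order.TTheory GRing.Theory Num.Theory.
Local Open Scope ring_scope.

Definition Ncomb (n : nat) (G : 'rV[int]_n -> Prop) : 'rV[int]_n -> Prop :=
  fun x => exists (m : nat) (g : 'I_m -> 'rV[int]_n) (c : 'I_m -> nat),
    (forall i, G (g i)) /\ x = \sum_(i < m) (g i) *+ c i.

Definition Ngenerated (n : nat) (X : 'rV[int]_n -> Prop) : Prop :=
  exists G : 'rV[int]_n -> Prop, forall x, X x <-> Ncomb G x.

(* X is covered by finitely many affine subspaces b_i + V_i of Q^n with
   dim V_i <= k (V_i is the row space of the matrix V i). *)
Definition dim_le (n : nat) (X : 'rV[rat]_n -> Prop) (k : nat) : Prop :=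
  exists (r : nat) (b : 'I_r -> 'rV[rat]_n) (V : 'I_r -> 'M[rat]_n),
    (forall i, (\rank (V i) <= k)%N) /\
    (forall x, X x -> exists i : 'I_r, (x - b i <= V i)%MS).

Definition dimension (n : nat) (X : 'rV[rat]_n -> Prop) (d : nat) : Prop :=
  dim_le X d /\ forall k, dim_le X k -> (d <= k)%N.

Definition toQ (n : nat) (X : 'rV[int]_n -> Prop) : 'rV[rat]_n -> Prop :=
  fun y => exists x, X x /\ y = map_mx (fun z : int => z%:~R) x.

Definition setI_pred (T : Type) (A B : T -> Prop) : T -> Prop := fun x => A x /\ B x.

Definition nondeg_inter (n : nat) (X1 X2 : 'rV[int]_n -> Prop) : Prop :=
  exists d : nat, dimension (toQ (setI_pred X1 X2)) d /\
    dimension (toQ X1) d /\ dimension (toQ X2) d.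

(* Both P_i are additive submonoids of Z^n, and I := P1 ∩ P2 is one too.  It
   suffices that some positive multiple D p of every p in P_i lies in I - I:
   from D1 p1 + t1 = s1 and D2 p2 + t2 = s2 we get
   p1 + ((D1 - 1) p1 + t1 + s2) = s1 + s2 = p2 + (s1 + (D2 - 1) p2 + t2).
   Pick finitely many elements of I spanning I over Q; their span has
   dimension at least dim I = dim P_i.  If p were outside it, P_i would contain
   the rows A_a of an integer matrix of rank > dim P_i, hence every point
   sum_a t^(a+1) A_a (t in N) of a moment curve.  An affine subspace whose
   direction does not contain the rows of A meets that curve in the roots of a
   nonzero polynomial, so finitely many subspaces of dimension dim P_i cannot
   cover P_i.  Hence p is a rational combination of elements of I; clearing
   denominators and splitting the coefficients by sign gives D p + t = s. *)

From HB Require Import structures.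
From mathcomp Require Import all_boot all_order all_algebra.
From Stdlib Require Import Classical Lia.
From mathcomp Require Import zify.
Import Order.TTheory GRing.Theory Num.Theory.
Local Open Scope ring_scope.

Definition addmonoid {V : nmodType} (M : V -> Prop) : Prop :=
  M 0 /\ forall x y, M x -> M y -> M (x + y).

Section AddMonoid.

Context {V : nmodType} {M : V -> Prop} (monoidM : addmonoid M).

Lemma addmonoidD {x y} : M x -> M y -> M (x + y).
Proof. by case: monoidM => _; apply. Qed.

Lemma addmonoid_sum (I : finType) (F : I -> V) :
  (forall i, M (F i)) -> M (\sum_i F i).
Proof. by case: monoidM => M0 MD MF; apply: big_ind. Qed.

Lemma addmonoid_mulrn {x} k : M x -> M (x *+ k).
Proof.
case: monoidM => M0 MD Mx; elim: k => [|k IHk]; first by rewrite mulr0n.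
by rewrite mulrS; apply: MD.
Qed.

Lemma addmonoidI {M' : V -> Prop} : addmonoid M' -> addmonoid (setI_pred M M').
Proof.
case: monoidM => M0 MD [M'0 M'D]; split; first by split.
by move=> x y [Mx M'x] [My M'y]; split; [apply: MD | apply: M'D].
Qed.

End AddMonoid.

Lemma Ncomb_addmonoid {n} (G : 'rV[int]_n -> Prop) : addmonoid (Ncomb G).
Proof.
split.
  by exists 0%N, (fun _ => 0), (fun _ => 0%N); split; [case | rewrite big_ord0].
move=> _ _ [m1 [g1 [c1 [Gg1 ->]]]] [m2 [g2 [c2 [Gg2 ->]]]].
pose glue T (f1 : 'I_m1 -> T) (f2 : 'I_m2 -> T) i :=
  match split i with inl i1 => f1 i1 | inr i2 => f2 i2 end.
exists (m1 + m2)%N, (glue _ g1 g2), (glue _ c1 c2); split.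
  by move=> i; rewrite /glue; case: (split i).
rewrite big_split_ord; congr (_ + _); apply: eq_bigr => i _.
  by rewrite /glue (unsplitK (inl i : 'I_m1 + 'I_m2)).
by rewrite /glue (unsplitK (inr i : 'I_m1 + 'I_m2)).
Qed.

Lemma Ngenerated_addmonoid {n} (P : 'rV[int]_n -> Prop) :
  Ngenerated P -> addmonoid P.
Proof.
move=> [G PG]; have [G0 GD] := Ncomb_addmonoid G.
by split=> [|x y /PG Px /PG Py]; apply/PG => //; apply: GD.
Qed.

Lemma moment_curve_poly {F : fieldType} {e m n} {A : 'M[F]_(e, n)}
    {V : 'M[F]_(m, n)} (b : 'rV[F]_n) :
  ~~ (A <= V)%MS ->
  exists Q : {poly F}, Q != 0 /\
    forall x, (\row_(a < e) x ^+ a.+1 *m A - b <= V)%MS -> root Q x.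
Proof.
rewrite submxE => /matrix0Pn[a0 [j AKj]].
set K := cokermx V in AKj *.
exists (\sum_(a < e) (A *m K) a j *: 'X^(a.+1) - ((b *m K) 0 j)%:P); split.
  apply: contraNneq AKj => /(congr1 (fun p : {poly F} => p`_a0.+1)).
  rewrite coefB coefC subr0 coef0 coef_sum (bigD1 a0) //= coefZ coefXn eqxx.
  rewrite mulr1 big1 ?addr0 => [-> // | a aa0].
  by rewrite coefZ coefXn eqSS eq_sym val_eqE (negbTE aa0) mulr0.
move=> x; rewrite submxE mulmxBl subr_eq0 -mulmxA => /eqP/rowP/(_ j) xAK.
rewrite /root hornerD hornerN hornerC horner_sum subr_eq0 -xAK.
rewrite mxE; apply/eqP; apply: eq_bigr => a _.
by rewrite hornerZ hornerXn [_ 0 a]mxE mulrC.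
Qed.

Lemma poly_natr_roots_eq0 (R : numDomainType) (p : {poly R}) :
  (forall t : nat, root p t%:R) -> p = 0.
Proof.
move=> rootp.
apply: (@roots_geq_poly_eq0 _ p [seq t%:R | t <- iota 0 (size p)]).
- by apply/allP => _ /mapP[t _ ->].
- by rewrite map_inj_uniq ?iota_uniq // => s t /eqP; rewrite eqr_nat => /eqP.
- by rewrite size_map size_iota.
Qed.

Definition toQmx {m n} (A : 'M[int]_(m, n)) : 'M[rat]_(m, n) :=
  map_mx (fun z : int => z%:~R) A.

Lemma toQmx_inj {m n} : injective (@toQmx m n).
Proof.
move=> A B /matrixP AB; apply/matrixP => i j.
by have := AB i j; rewrite !mxE => /intr_inj.
Qed.

Lemma toQmxMn {m n} (A : 'M[int]_(m, n)) k : toQmx (A *+ k) = toQmx A *+ k.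
Proof. exact: raddfMn. Qed.

Lemma toQmxM {m n p} (A : 'M[int]_(m, n)) (B : 'M[int]_(n, p)) :
  toQmx (A *m B) = toQmx A *m toQmx B.
Proof. exact: map_mxM. Qed.

Lemma toQmx_col_mx {m1 m2 n} (A1 : 'M[int]_(m1, n)) (A2 : 'M[int]_(m2, n)) :
  toQmx (col_mx A1 A2) = col_mx (toQmx A1) (toQmx A2).
Proof. exact: map_col_mx. Qed.

Lemma toQmx_moment {e n} (A : 'M[int]_(e, n)) (t : nat) :
  toQmx (\sum_(a < e) row a A *+ (t ^ a.+1)%N) =
  \row_(a < e) (t%:R : rat) ^+ a.+1 *m toQmx A.
Proof.
rewrite mulmx_sum_row /toQmx raddf_sum; apply: eq_bigr => a _.
rewrite raddfMn mxE -natrX scaler_nat; congr (_ *+ _).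
by apply/rowP => j; rewrite !mxE.
Qed.

Lemma dim_le_rank {n e d} {M : 'rV[int]_n -> Prop} {A : 'M[int]_(e, n)} :
  addmonoid M -> (forall a, M (row a A)) -> dim_le (toQ M) d ->
  (\rank (toQmx A) <= d)%N.
Proof.
move=> monoidM MA [r [b [V [rankV coverM]]]].
rewrite leqNgt; apply/negP => rankA.
have notAV i : ~~ (toQmx A <= V i)%MS.
  by apply: contraTN rankA => /mxrankS/leq_trans/(_ (rankV i)); rewrite -leqNgt.
have [Q QP] := fin_all_exists (fun i => moment_curve_poly (b i) (notAV i)).
have nzQ : \prod_i Q i != 0 by apply/prodf_neq0 => i _; case: (QP i).
apply: (negP nzQ); apply/eqP/poly_natr_roots_eq0 => t.
have Mt : M (\sum_(a < e) row a A *+ (t ^ a.+1)%N).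
  by apply: addmonoid_sum => // a; apply: addmonoid_mulrn.
have [i covered] := coverM _ (ex_intro _ _ (conj Mt erefl)).
rewrite /root horner_prod; apply/prodf_eq0; exists i => //.
by apply: (proj2 (QP i)); rewrite -toQmx_moment.
Qed.

Lemma ltmx_col_mx {F : fieldType} {m n} {B : 'M[F]_(m, n)} {x : 'rV[F]_n} :
  ~~ (x <= B)%MS -> (B < col_mx B x)%MS.
Proof.
by move=> xB; rewrite ltmxE col_mx_sub submx_refl xB -addsmxE addsmxSl.
Qed.

Lemma row_col_mx_forall {T : Type} {n k} {S : 'rV[T]_n -> Prop}
    {B : 'M[T]_(k, n)} {x : 'rV[T]_n} :
  (forall a, S (row a B)) -> S x -> forall a, S (row a (col_mx B x)).
Proof.
move=> SB Sx a; rewrite -(splitK a); case: (split a) => a' /=.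
  by rewrite rowKu.
by rewrite rowKd (ord1 a') row_id.
Qed.

Lemma exists_spanning_rows {n} (S : 'rV[int]_n -> Prop) :
  exists k (B : 'M[int]_(k, n)), (forall a, S (row a B)) /\
    forall x, S x -> (toQmx x <= toQmx B)%MS.
Proof.
suff grow j k (B : 'M[int]_(k, n)) : (n - \rank (toQmx B) <= j)%N ->
    (forall a, S (row a B)) -> exists k (B : 'M[int]_(k, n)),
    (forall a, S (row a B)) /\ forall x, S x -> (toQmx x <= toQmx B)%MS.
  by apply: (grow n 0%N 0); [rewrite leq_subr | case].
elim: j k B => [|j IHj] k B rankB SB.
  exists k, B; split=> // x _; apply: submx_full.
  by rewrite /row_full eqn_leq rank_leq_col -subn_eq0 -leqn0.
case: (classic (forall x, S x -> (toQmx x <= toQmx B)%MS)) => [spanB | ].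
  by exists k, B.
move=> /not_all_ex_not[x] /(@imply_to_and (S x) _)[Sx /negP xB].
apply: (IHj _ (col_mx B x)); last exact: row_col_mx_forall.
have := rank_ltmx (ltmx_col_mx xB).
have := rank_leq_col (col_mx (toQmx B) (toQmx x)).
rewrite toQmx_col_mx; move: rankB.
set r := \rank (toQmx B); set r' := \rank _; lia.
Qed.

Lemma dim_le_span {n k} {S : 'rV[int]_n -> Prop} {B : 'M[int]_(k, n)} :
  (forall x, S x -> (toQmx x <= toQmx B)%MS) ->
  dim_le (toQ S) (\rank (toQmx B)).
Proof.
move=> spanB; exists 1%N, (fun _ => 0), (fun _ => <<toQmx B>>%MS).
split=> [_ | _ [x [Sx ->]]]; first by rewrite mxrank_gen.
by exists ord0; rewrite subr0 genmxE; apply: spanB.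
Qed.

Lemma rat_row_scale_int {k} (c : 'rV[rat]_k) :
  exists D (z : 'rV[int]_k), c *+ D.+1 = toQmx z.
Proof.
pose den a := absz (denq (c 0 a)).
have [D DE] : exists D, (\prod_a den a)%N = D.+1.
  exists (\prod_a den a).-1; rewrite prednK // prodn_gt0 // => a.
  by rewrite absz_gt0 denq_neq0.
exists D, (\row_a (numq (c 0 a) * (\prod_(a' | a' != a) den a')%N%:Z)).
apply/rowP => a; rewrite -DE mulmxnE !mxE (bigD1 a) //= -mulr_natr natrM mulrA.
by rewrite natr_absz normr_denq -numqE rmorphM.
Qed.

Lemma int_diff_nat (z : int) : exists uv : nat * nat, z = uv.1%:Z - uv.2%:Z.
Proof.
case: z => m; [exists (m, 0%N) | exists (0%N, m.+1)].
  by rewrite subr0.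
by rewrite sub0r NegzE.
Qed.

Lemma addmonoid_span_diff {n k} {I : 'rV[int]_n -> Prop} {B : 'M[int]_(k, n)}
    {p : 'rV[int]_n} :
  addmonoid I -> (forall a, I (row a B)) -> (toQmx p <= toQmx B)%MS ->
  exists D t s, I t /\ I s /\ p *+ D.+1 + t = s.
Proof.
move=> monoidI IB /submxP[c pE].
have [D [z czE]] := rat_row_scale_int c.
have [uv zE] := fin_all_exists (fun a => int_diff_nat (z 0 a)).
have comb w : I (\sum_a row a B *+ w a).
  by apply: addmonoid_sum => // a; apply: addmonoid_mulrn.
exists D, (\sum_a row a B *+ (uv a).2), (\sum_a row a B *+ (uv a).1).
split; [exact: comb | split; [exact: comb |]].
have -> : p *+ D.+1 = z *m B.
  apply: toQmx_inj; rewrite toQmxMn toQmxM pE -czE.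
  by rewrite -[LHS](raddfMn (mulmxr (toQmx B))).
apply/eqP; rewrite eq_sym -subr_eq mulmx_sum_row -sumrB.
apply/eqP/eq_bigr => a _.
by rewrite zE scalerBl -!natz !scaler_nat.
Qed.

Lemma addmonoid_multiple_diff {n d} {M I : 'rV[int]_n -> Prop} :
  addmonoid M -> addmonoid I -> (forall x, I x -> M x) ->
  (forall k, dim_le (toQ I) k -> (d <= k)%N) -> dim_le (toQ M) d ->
  forall p, M p -> exists D t s, I t /\ I s /\ p *+ D.+1 + t = s.
Proof.
move=> monoidM monoidI IM dimI dimM p Mp.
have [k [B [IB spanB]]] := exists_spanning_rows I.
apply: (addmonoid_span_diff monoidI IB); apply: contraT => pB.
have MBp := row_col_mx_forall (fun a => IM _ (IB a)) Mp.
have := dim_le_rank monoidM MBp dimM; rewrite toQmx_col_mx leqNgt.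
by rewrite (leq_ltn_trans (dimI _ (dim_le_span spanB))) ?rank_ltmx ?ltmx_col_mx.
Qed.

Theorem mainTheorem19 (n : nat) (P1 P2 : 'rV[int]_n -> Prop) :
  Ngenerated P1 -> Ngenerated P2 -> nondeg_inter P1 P2 ->
  forall p1 p2 : 'rV[int]_n, P1 p1 -> P2 p2 ->
  exists p1' p2' : 'rV[int]_n, P1 p1' /\ P2 p2' /\ p1 + p1' = p2 + p2'.
Proof.
move=> /Ngenerated_addmonoid monoid1 /Ngenerated_addmonoid monoid2.
move=> [d [[_ dimI] [[dimP1 _] [dimP2 _]]]] p1 p2 P1p1 P2p2.
have monoidI := addmonoidI monoid1 monoid2.
have [D1 [t1 [s1 [[P1t1 _] [[_ P2s1] E1]]]]] :=
  addmonoid_multiple_diff monoid1 monoidI (fun=> @proj1 _ _) dimI dimP1 _ P1p1.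
have [D2 [t2 [s2 [[_ P2t2] [[P1s2 _] E2]]]]] :=
  addmonoid_multiple_diff monoid2 monoidI (fun=> @proj2 _ _) dimI dimP2 _ P2p2.
exists (p1 *+ D1 + t1 + s2), (s1 + p2 *+ D2 + t2); split; [|split].
- by do 2!apply: (addmonoidD monoid1) => //; apply: addmonoid_mulrn.
- by do 2!apply: (addmonoidD monoid2) => //; apply: addmonoid_mulrn.
- by rewrite !addrA -mulrS E1 -E2 mulrS (addrC p2 s1) !addrA.
Qed.
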